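(* Let $\Omega = \{-1\} \cup [0,\infty)$, let $E$ be the Banach space of all bounded continuous real functions on $\Omega$ with the supremum norm, and let $$C = \{ x \in E : 0 \le x(u) \le 1 \text{ for all } u \in \Omega,\ |x(u_1)-x(u_2)| \le |u_1-u_2| \text{ for all } u_1,u_2 \in [0,\infty)\}.$$ For $x \in C$ and $v \ge 0$ put $\alpha_x(v) = \sup\{ x(s) : s \in \{-1\}\cup[v,\infty)\}$. For $t \in [0,1]$ and $x \in C$ define $T(t)x$ on $\Omega$ by $$(T(t)x)(u) = \begin{cases} x(-1), & u=-1,\\ x(u-t), & u \ge t,\\ x(0)-t+u, & 0\le u\le t \text{ and } 1-\alpha_x(1-t+u) \le x(0)-t+u,\\ x(0)+t-u, & 0\le u\le t \text{ and } 1-\alpha_x(1-t+u) \ge x(0)+t-u,\\ 1-\alpha_x(1-t+u), & 0 \le u \le t \text{ and } |1-\alpha_x(1-t+u)-x(0)| \le t-u. \end{cases}$$ Fix $x \in C$, $t \in [0,1]$, and $u_1,u_2$ with $0 \le u_1 \le u_2 \le t$. Then: (i) if $1-\alpha_x(1-t+u_1) < (T(t)x)(u_2) - u_2 + u_1$, then $(T(t)x)(u_1) = x(0)-t+u_1$ and $(T(t)x)(u_2) = x(0)-t+u_2$; (ii) if $1-\alpha_x(1-t+u_1) > (T(t)x)(u_2) + u_2 - u_1$, then $(T(t)x)(u_1) = x(0)+t-u_1$ and $(T(t)x)(u_2) = x(0)+t-u_2$; (iii) if $|1-\alpha_x(1-t+u_1) - (T(t)x)(u_2)| \le u_2 - u_1$,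 then $(T(t)x)(u_1) = 1-\alpha_x(1-t+u_1)$. *)

From HB Require Import structures.
From mathcomp Require Import all_boot all_order all_algebra.
From mathcomp Require Import all_classical all_reals all_analysis.
Set Implicit Arguments. Unset Strict Implicit. Unset Printing Implicit Defensive.
Import Order.TTheory GRing.Theory Num.Theory.
Import numFieldNormedType.Exports.
Local Open Scope classical_set_scope.
Local Open Scope ring_scope.

Definition Omega (R : realType) : set R := [set u | u = -1 \/ 0 <= u].

(* Elements of E are represented by functions R -> R, only their values on
   Omega matter: bounded and continuous on Omega. *)
Definition inE (R : realType) (x : R -> R) : Prop :=
  (exists M : R, forall u, @Omega R u -> `|x u| <= M) /\
  {within @Omega R, continuous x}.

Definition inC (R : realType) (x : R -> R) : Prop :=
  inE x /\
  (forall u, @Omega R u -> 0 <= x u <= 1) /\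
  (forall u1 u2, 0 <= u1 -> 0 <= u2 -> `|x u1 - x u2| <= `|u1 - u2|).

Definition alpha (R : realType) (x : R -> R) (v : R) : R :=
  sup [set x s | s in [set s | s = -1 \/ v <= s]].

(* (T(t)x)(u) for u in Omega; the five (overlapping but consistent) cases
   of the paper are rendered by an if-then-else chain. *)
Definition Tt (R : realType) (t : R) (x : R -> R) (u : R) : R :=
  if u == -1 then x (-1)
  else if t <= u then x (u - t)
  else let a := 1 - alpha x (1 - t + u) in
       if a <= x 0 - t + u then x 0 - t + u
       else if x 0 + t - u <= a then x 0 + t - u
       else a.

From HB Require Import structures.
From mathcomp Require Import all_boot all_order all_algebra.
From mathcomp Require Import all_classical all_reals all_analysis.
From mathcomp Require Import lra.
Import Order.TTheory GRing.Theory Num.Theory.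
Import numFieldNormedType.Exports.
Local Open Scope ring_scope.
Set Implicit Arguments. Unset Strict Implicit.

(* On [0, t] the value (T(t)x)(u) is the clamp of a(u) := 1 - alpha_x(1-t+u)
   to the window [x(0) - t + u, x(0) + t - u].  Since alpha_x is nonincreasing
   and 1-Lipschitz from above, a(u1) <= a(u2) <= a(u1) + (u2 - u1); the window
   shrinks at unit speed from both ends.  The three claims are then elementary
   facts about clamping a slowly increasing signal to such a window. *)

Section Clamp.
Variable R : realDomainType.

Definition clamp (lo hi a : R) : R :=
  if a <= lo then lo else if hi <= a then hi else a.

Variant clamp_spec (lo hi a : R) : R -> Type :=
  | ClampLo of a <= lo : clamp_spec lo hi a lo
  | ClampHi of lo < a & hi <= a : clamp_spec lo hi a hi
  | ClampIn of lo < a & a < hi : clamp_spec lo hi a a.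

Lemma clampP lo hi a : clamp_spec lo hi a (clamp lo hi a).
Proof.
rewrite /clamp; have [alo|loa] := leP a lo; first exact: ClampLo.
by have [hia|ahi] := leP hi a; [exact: ClampHi | exact: ClampIn].
Qed.

Lemma clamp_id lo hi a : lo <= a <= hi -> clamp lo hi a = a.
Proof.
by case/andP=> loa ahi; case: clampP => //; lra.
Qed.

End Clamp.

Section ShrinkingWindow.
Variables (R : realDomainType) (c d u1 u2 a1 a2 : R).

Let T1 := clamp (c + u1) (d - u1) a1.
Let T2 := clamp (c + u2) (d - u2) a2.

Lemma clamp_window_lo : a2 <= a1 + (u2 - u1) ->
  a1 < T2 - u2 + u1 -> T1 = c + u1 /\ T2 = c + u2.
Proof.
move=> a21; rewrite /T1 /T2.
case: (clampP (c + u2)) => [_|_ hia2|_ _] lt_a1; [|exfalso; lra..].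
by split=> //; case: (clampP (c + u1)) => //; lra.
Qed.

Lemma clamp_window_hi : u1 <= u2 -> c + u2 <= d - u2 -> a1 <= a2 ->
  a1 > T2 + u2 - u1 -> T1 = d - u1 /\ T2 = d - u2.
Proof.
move=> u12 window2 a12; rewrite /T1 /T2.
case: (clampP (c + u2)) => [a2lo|_ _|_ _] gt_a1; [exfalso; lra| |exfalso; lra].
by split=> //; case: (clampP (c + u1)) => //; lra.
Qed.

Lemma clamp_window_in : c + u2 <= d - u2 ->
  `|a1 - T2| <= u2 - u1 -> T1 = a1.
Proof.
move=> window2 /ler_normlP[h1 h2]; rewrite /T1 clamp_id //.
by move: h1 h2; rewrite /T2; case: (clampP (c + u2)); lra.
Qed.

End ShrinkingWindow.

Section Alpha.
Variables (R : realType) (x : R -> R).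
Hypothesis xC : inC x.

Lemma le_alpha v s : 0 <= v -> s = -1 \/ v <= s -> x s <= alpha x v.
Proof.
move=> v0 hs; apply: ub_le_sup; last by exists s.
exists 1 => _ [s' hs' <-]; case: xC => _ [x01 _].
have /andP[] // : 0 <= x s' <= 1.
by apply: x01; case: hs' => [->|vs']; [left | right; exact: le_trans vs'].
Qed.

Lemma alpha_le v y : (forall s, s = -1 \/ v <= s -> x s <= y) -> alpha x v <= y.
Proof.
move=> xy; apply: ge_sup; first by exists (x (-1)), (-1) => //; left.
by move=> _ [s hs <-]; exact: xy.
Qed.

Lemma alpha_antimono v1 v2 : 0 <= v1 -> v1 <= v2 -> alpha x v2 <= alpha x v1.
Proof.
move=> v10 v12; apply: alpha_le => s [->|v2s]; apply: le_alpha => //; first by left.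
by right; exact: le_trans v2s.
Qed.

(* Points of [v1, v2) are within distance v2 - v1 of v2, and x is 1-Lipschitz. *)
Lemma alpha_leD v1 v2 : 0 <= v1 -> v1 <= v2 -> alpha x v1 <= alpha x v2 + (v2 - v1).
Proof.
move=> v10 v12; have v20 : 0 <= v2 by exact: le_trans v12.
have x_v2 := le_alpha v20 (or_intror (lexx v2)).
apply: alpha_le => s hs; have [v2s|sv2] := leP v2 s.
  by have := le_alpha v20 (or_intror v2s); lra.
case: hs => [->|v1s]; first by have := le_alpha v20 (or_introl erefl); lra.
have dist_s : `|s - v2| = v2 - s by rewrite distrC ger0_norm // subr_ge0 ltW.
case: xC => _ [_ xLip]; have := xLip s v2 (le_trans v10 v1s) v20.
by rewrite dist_s => /ler_normlW; lra.
Qed.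

Lemma Tt_clamp t u : 0 <= u -> u <= t ->
  Tt t x u = clamp (x 0 - t + u) (x 0 + t - u) (1 - alpha x (1 - t + u)).
Proof.
move=> u0 ut; rewrite /Tt gt_eqF ?(lt_le_trans _ u0) ?ltrN10 //.
case: leP => // tu; have -> : u = t by apply/le_anti; rewrite ut tu.
by rewrite subrr; case: clampP; lra.
Qed.

End Alpha.

Theorem lemma2p3 (R : realType) (x : R -> R) (t u1 u2 : R) :
  inC x -> 0 <= t <= 1 -> 0 <= u1 -> u1 <= u2 -> u2 <= t ->
  [/\ (1 - alpha x (1 - t + u1) < Tt t x u2 - u2 + u1 ->
         Tt t x u1 = x 0 - t + u1 /\ Tt t x u2 = x 0 - t + u2),
      (1 - alpha x (1 - t + u1) > Tt t x u2 + u2 - u1 ->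
         Tt t x u1 = x 0 + t - u1 /\ Tt t x u2 = x 0 + t - u2)
    & (`|1 - alpha x (1 - t + u1) - Tt t x u2| <= u2 - u1 ->
         Tt t x u1 = 1 - alpha x (1 - t + u1))].
Proof.
move=> xC /andP[_ t1] u10 u12 u2t.
have u20 : 0 <= u2 by exact: le_trans u12.
have u1t : u1 <= t by exact: le_trans u2t.
have v10 : 0 <= 1 - t + u1 by lra.
have v12 : 1 - t + u1 <= 1 - t + u2 by rewrite lerD2l.
have a12 : 1 - alpha x (1 - t + u1) <= 1 - alpha x (1 - t + u2).
  by rewrite lerD2l lerN2 alpha_antimono.
have a21 : 1 - alpha x (1 - t + u2) <= 1 - alpha x (1 - t + u1) + (u2 - u1).
  by have := alpha_leD xC v10 v12; lra.
have window2 : x 0 - t + u2 <= x 0 + t - u2 by lra.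
rewrite (Tt_clamp x u10 u1t) (Tt_clamp x u20 u2t).
split; [exact: clamp_window_lo | exact: clamp_window_hi | exact: clamp_window_in].
Qed.
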